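(* For every integer $m\ge1$ the following identities hold: $$\sum_{k=0}^{m}\frac{\binom{m}{k}\binom{m}{k}}{\binom{2m}{2k}}=\frac{(2m)!!}{(2m-1)!!}=4^m\frac{(m!)^2}{(2m)!},$$ $$\sum_{k=0}^{m}\frac{\binom{m}{k}\binom{m}{k+1}}{\binom{2m}{2k}}=2m+1-\frac{(2m)!!}{(2m-1)!!},$$ $$\sum_{k=0}^{m}\frac{\binom{m}{k}\binom{m+1}{k+1}}{\binom{2m}{2k}}=2m+1.$$
   Context: Convention: $\binom{m}{m+1}=0$, $\binom{m}{0}=1$. $(2m)!!=2\cdot4\cdots(2m)$, $(2m-1)!!=1\cdot3\cdots(2m-1)$. *)

From HB Require Import structures.
From mathcomp Require Import all_boot all_order all_algebra.
Set Implicit Arguments. Unset Strict Implicit. Unset Printing Implicit Defensive.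

(* (2m)!! = 2*4*...*(2m) ; (2m-1)!! = 1*3*...*(2m-1) (empty products = 1) *)
Definition even_dfact (m : nat) : nat := \prod_(1 <= i < m.+1) (2 * i).
Definition odd_dfact (m : nat) : nat := \prod_(1 <= i < m.+1) (2 * i - 1).

(* Put A(m,k) = C(m,k)^2 / C(2m,2k) and G(m,k) = C(m,k) C(m+1,k) / C(2m,2k).
   The sum of G(m,k) telescopes, G(m,k) = F(k+1) - F(k) for the Gosper-style
   antidifference F(k) = k (2m-2k+1) / (m+1) * G(m,k), so it equals
   F(m) + G(m,m) = m + (m+1) = 2m+1; reversing k <-> m-k turns it into the third
   sum.  Comparing A(m+1,k) with A(m,k) gives (2m+1) A(m+1,k) = (2m+2) A(m,k) - G(m,k),
   hence (2m+1) S(m+1) = (2m+2) S(m) for S(m) = sum_k A(m,k): the recursion of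
   (2m)!!/(2m-1)!!.  The second sum is the third minus the first by Pascal's rule. *)
From HB Require Import structures.
From mathcomp Require Import all_boot all_order all_algebra.
From mathcomp Require Import ring lra zify.
Import Order.TTheory GRing.Theory Num.Theory.
Local Open Scope ring_scope.

Lemma even_dfactS m : even_dfact m.+1 = (even_dfact m * (2 * m.+1))%N.
Proof. by rewrite /even_dfact big_nat_recr. Qed.

Lemma odd_dfactS m : odd_dfact m.+1 = (odd_dfact m * (2 * m).+1)%N.
Proof. by rewrite /odd_dfact big_nat_recr //= mulnS addSn subn1. Qed.

Lemma even_dfactE m : even_dfact m = (2 ^ m * m`!)%N.
Proof.
elim: m => [|m IHm]; first by rewrite /even_dfact big_geq.
by rewrite even_dfactS IHm factS expnS; lia.
Qed.

Lemma odd_even_dfact m : (odd_dfact m * even_dfact m)%N = (2 * m)`!.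
Proof.
elim: m => [|m IHm]; first by rewrite /even_dfact /odd_dfact !big_geq.
rewrite odd_dfactS even_dfactS (_ : (2 * m.+1 = (2 * m).+2)%N); last by lia.
by rewrite !factS -IHm; lia.
Qed.

Lemma odd_dfact_gt0 m : (0 < odd_dfact m)%N.
Proof. by have := fact_gt0 (2 * m); rewrite -odd_even_dfact muln_gt0 => /andP[]. Qed.

Section BinomialQuotients.
Variable R : realFieldType.
Implicit Types m n k d : nat.

Lemma natr_bin_succ n k :
  'C(n, k.+1)%:R = (n - k)%:R / k.+1%:R * 'C(n, k)%:R :> R.
Proof. by rewrite mulrAC -natrM -mul_bin_left natrM [RHS]mulrC mulKf ?pnatr_eq0. Qed.

Lemma natr_binS n k : (k <= n)%N ->
  'C(n.+1, k)%:R = n.+1%:R / (n.+1 - k)%:R * 'C(n, k)%:R :> R.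
Proof.
move=> le_kn; rewrite mulrAC -natrM (mul_bin_down n.+1) natrM [RHS]mulrC mulKf //.
by rewrite pnatr_eq0 subn_eq0 -ltnNge ltnS.
Qed.

Definition bin2_quot m k : R := ('C(m, k) * 'C(m, k))%:R / 'C(2 * m, 2 * k)%:R.
Definition binS_quot m k : R := ('C(m, k) * 'C(m.+1, k))%:R / 'C(2 * m, 2 * k)%:R.

Lemma binS_quot_succ n d :
  binS_quot (n + d.+1) n.+1
    = (d.+2 * (2 * n).+1)%:R / (n.+1 * (2 * d).+1)%:R * binS_quot (n + d.+1) n.
Proof.
have C2_gt0 : 0 < 'C(2 * (n + d.+1), 2 * n)%:R :> R by rewrite ltr0n bin_gt0; lia.
rewrite /binS_quot !natrM (_ : (2 * n.+1 = (2 * n).+1.+1)%N); last by lia.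
rewrite !natr_bin_succ addKn -addnS addKn.
rewrite (_ : (2 * (n + d.+1) - (2 * n).+1 = (2 * d).+1)%N); last by lia.
rewrite (_ : (2 * (n + d.+1) - 2 * n = (2 * d).+2)%N); last by lia.
have n_ge0 := ler0n R n; have d_ge0 := ler0n R d.
by field; rewrite !lt0r_neq0 //; lra.
Qed.

Lemma bin2_quot_succ k d :
  bin2_quot (k + d).+1 k
    = ((k + d).+1 * (2 * d).+1)%:R / (d.+1 * (2 * (k + d)).+1)%:R * bin2_quot (k + d) k.
Proof.
have C2_gt0 : 0 < 'C(2 * (k + d), 2 * k)%:R :> R by rewrite ltr0n bin_gt0; lia.
rewrite /bin2_quot !natrM (_ : (2 * (k + d).+1 = (2 * (k + d)).+1.+1)%N); last by lia.
rewrite !natr_binS; try lia.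
rewrite (_ : ((k + d).+1 - k = d.+1)%N); last by lia.
rewrite (_ : ((2 * (k + d)).+2 - 2 * k = (2 * d).+2)%N); last by lia.
rewrite (_ : ((2 * (k + d)).+1 - 2 * k = (2 * d).+1)%N); last by lia.
have k_ge0 := ler0n R k; have d_ge0 := ler0n R d.
by field; rewrite !lt0r_neq0 //; lra.
Qed.

Lemma binS_quotE k d :
  binS_quot (k + d) k = (k + d).+1%:R / d.+1%:R * bin2_quot (k + d) k.
Proof.
rewrite /binS_quot /bin2_quot !natrM natr_binS ?leq_addr // -addnS addKn.
by rewrite mulrCA !mulrA.
Qed.

Lemma bin2_quot_rec m k : (k <= m)%N ->
  (2 * m + 1)%:R * bin2_quot m.+1 k = (2 * m + 2)%:R * bin2_quot m k - binS_quot m k.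
Proof.
move=> /subnKC <-; move: (m - k)%N => d.
rewrite bin2_quot_succ binS_quotE.
have k_ge0 := ler0n R k; have d_ge0 := ler0n R d.
by field; rewrite !lt0r_neq0 //; lra.
Qed.

Definition binS_quot_prim m n : R := (n * (2 * (m - n)).+1)%:R / m.+1%:R * binS_quot m n.

Lemma binS_quot_primS m n : (n < m)%N ->
  binS_quot_prim m n.+1 - binS_quot_prim m n = binS_quot m n.
Proof.
move=> /subnKC <-; move: (m - n.+1)%N => d; rewrite addSnnS.
rewrite /binS_quot_prim binS_quot_succ addKn -addSnnS addKn.
have n_ge0 := ler0n R n; have d_ge0 := ler0n R d.
by field; rewrite !lt0r_neq0 //; lra.
Qed.

Lemma sum_binS_quot m : \sum_(0 <= k < m.+1) binS_quot m k = (2 * m + 1)%:R.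
Proof.
rewrite big_nat_recr //= (@telescope_sumr_eq _ _ _ (binS_quot_prim m)) //; last first.
  by move=> k /andP[_ lt_km]; rewrite binS_quot_primS.
rewrite /binS_quot_prim subnn !mul0n !mul0r subr0 /binS_quot !binn binSn.
rewrite muln0 muln1 mul1n divr1 divfK ?pnatr_eq0 // -natrD.
by congr _%:R; lia.
Qed.

Lemma sum_binSS_quot m :
  \sum_(0 <= k < m.+1) ('C(m, k) * 'C(m.+1, k.+1))%:R / ('C(2 * m, 2 * k))%:R
    = (2 * m + 1)%:R :> R.
Proof.
rewrite -sum_binS_quot big_nat_rev /=; apply: eq_big_nat => k /andP[_ le_km].
by rewrite /binS_quot add0n subSS bin_sub // -subSn // bin_sub ?leqW // mulnBr bin_sub ?leq_mul2l.
Qed.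

Lemma sum_bin2_quotS m :
  (2 * m + 1)%:R * \sum_(0 <= k < m.+2) bin2_quot m.+1 k
    = (2 * m + 2)%:R * \sum_(0 <= k < m.+1) bin2_quot m k.
Proof.
rewrite big_nat_recr //= {2}/bin2_quot !binn divr1 mulrDr mulr_sumr.
under [in LHS]eq_big_nat => k /andP[_ le_km] do rewrite bin2_quot_rec //.
by rewrite sumrB -mulr_sumr sum_binS_quot mul1n mulr1 subrK.
Qed.

Lemma sum_bin2_quot m :
  \sum_(0 <= k < m.+1) bin2_quot m k = (even_dfact m)%:R / (odd_dfact m)%:R.
Proof.
elim: m => [|m IHm].
  by rewrite big_nat1 /bin2_quot /even_dfact /odd_dfact !big_geq.
have odd_gt0 : 0 < (odd_dfact m)%:R :> R by rewrite ltr0n odd_dfact_gt0.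
apply: (mulfI (_ : (2 * m + 1)%:R != 0)); first by rewrite pnatr_eq0 addn1.
rewrite sum_bin2_quotS IHm even_dfactS odd_dfactS !natrM.
have m_ge0 := ler0n R m.
by field; rewrite !lt0r_neq0 //; lra.
Qed.

Lemma sum_bin_succ_quot m :
  \sum_(0 <= k < m.+1) ('C(m, k) * 'C(m, k.+1))%:R / ('C(2 * m, 2 * k))%:R
    = (2 * m + 1)%:R - (even_dfact m)%:R / (odd_dfact m)%:R :> R.
Proof.
rewrite -sum_binSS_quot -sum_bin2_quot -sumrB; apply: eq_bigr => k _.
by rewrite binS mulnDr natrD mulrDl addrK.
Qed.

Lemma dfact_quotE m :
  (even_dfact m)%:R / (odd_dfact m)%:R = 4 ^+ m * ((m`!) ^ 2)%:R / ((2 * m)`!)%:R :> R.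
Proof.
have four_exp : (4 : R) ^+ m = 2 ^+ m * 2 ^+ m by rewrite -exprMn -natrM.
rewrite -odd_even_dfact even_dfactE !natrM !natrX four_exp.
have fact_gt0R : 0 < (m`!)%:R :> R by rewrite ltr0n fact_gt0.
have odd_gt0 : 0 < (odd_dfact m)%:R :> R by rewrite ltr0n odd_dfact_gt0.
have exp_gt0 : 0 < 2 ^+ m :> R by rewrite exprn_gt0.
by field; rewrite !lt0r_neq0.
Qed.

End BinomialQuotients.

(* The identities also hold for m = 0. *)
Theorem proposition5p1 (m : nat) (hm : (1 <= m)%N) :
  [/\ \sum_(0 <= k < m.+1) ('C(m, k) * 'C(m, k))%:R / ('C(2 * m, 2 * k))%:R
        = (even_dfact m)%:R / (odd_dfact m)%:R :> rat,
      (even_dfact m)%:R / (odd_dfact m)%:R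
        = 4 ^+ m * ((m`!) ^ 2)%:R / ((2 * m)`!)%:R :> rat,
      \sum_(0 <= k < m.+1) ('C(m, k) * 'C(m, k.+1))%:R / ('C(2 * m, 2 * k))%:R
        = (2 * m + 1)%:R - (even_dfact m)%:R / (odd_dfact m)%:R :> rat
    & \sum_(0 <= k < m.+1) ('C(m, k) * 'C(m.+1, k.+1))%:R / ('C(2 * m, 2 * k))%:R
        = (2 * m + 1)%:R :> rat].
Proof.
split; [exact: sum_bin2_quot | exact: dfact_quotE | exact: sum_bin_succ_quot | exact: sum_binSS_quot].
Qed.
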